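(* For every connected graph $F$ other than $P_2$ and $P_3$, we have $D_v(F)\ge (v(F)+1)/2$ and $W_v(F)\ge (v(F)-1)/2$.
   Context: Graphs are finite simple graphs; $v(F)$ is the number of vertices; $P_n$ is the path on $n$ vertices. We use first-order logic of graphs with relation symbols for adjacency and equality only; variable width of a sentence is the number of distinct variables it uses. $D_v(F)$ (resp. $W_v(F)$) is the minimum quantifier depth (resp. variable width) of a first-order sentence $\Phi$ for which there is an integer $k$ such that for every connected graph $G$ with at least $k$ vertices, $G\models\Phi$ if and only if $G$ contains a (not necessarily induced) subgraph isomorphic to $F$. *)

From mathcomp Require Import all_boot.
Set Implicit Arguments. Unset Strict Implicit. Unset Printing Implicit Defensive.

Record sgraph := SGraph {
  vert :> finType;
  adj : rel vert;
  adj_sym : symmetric adj;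
  adj_irrefl : irreflexive adj }.

Definition nverts (G : sgraph) : nat := #|vert G|.

Definition connected (G : sgraph) : Prop :=
  0 < #|vert G| /\ forall x y : vert G, connect (@adj G) x y.

Definition contains (G F : sgraph) : Prop :=
  exists f : vert F -> vert G, injective f /\
    forall x y : vert F, adj x y -> adj (f x) (f y).

Definition isomorphic (F H : sgraph) : Prop :=
  exists f : vert F -> vert H, bijective f /\
    forall x y : vert F, adj (f x) (f y) = adj x y.

Definition path_adj (n : nat) : rel 'I_n :=
  fun i j => (i.+1 == j :> nat) || (j.+1 == i :> nat).
Lemma path_adj_sym n : symmetric (@path_adj n).
Proof. by move=> i j; rewrite /path_adj orbC. Qed.
Lemma path_adj_irrefl n : irreflexive (@path_adj n).
Proof. by move=> i; rewrite /path_adj orbb; apply/negbTE; rewrite neq_ltn ltnSn orbT. Qed.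
Definition P (n : nat) : sgraph := SGraph (@path_adj_sym n) (@path_adj_irrefl n).

(** First-order formulas of graphs: relation symbols adjacency and equality
    only (no truth constants), variables indexed by nat. *)
Inductive form : Type :=
| FAdj : nat -> nat -> form
| FEq  : nat -> nat -> form
| FNot : form -> form
| FAnd : form -> form -> form
| FOr  : form -> form -> form
| FEx  : nat -> form -> form
| FAll : nat -> form -> form.

Fixpoint qdepth (f : form) : nat :=
  match f with
  | FAdj _ _ | FEq _ _ => 0
  | FNot g => qdepth g
  | FAnd g h | FOr g h => maxn (qdepth g) (qdepth h)
  | FEx _ g | FAll _ g => (qdepth g).+1
  end.

Fixpoint vars (f : form) : seq nat :=
  match f with
  | FAdj x y | FEq x y => [:: x; y]
  | FNot g => vars g
  | FAnd g h | FOr g h => vars g ++ vars h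
  | FEx x g | FAll x g => x :: vars g
  end.

Definition width (f : form) : nat := size (undup (vars f)).

Fixpoint fv (f : form) : seq nat :=
  match f with
  | FAdj x y | FEq x y => [:: x; y]
  | FNot g => fv g
  | FAnd g h | FOr g h => fv g ++ fv h
  | FEx x g | FAll x g => filter (fun y => y != x) (fv g)
  end.

Definition sentence (f : form) : Prop := fv f = [::].

Definition upd (G : sgraph) (e : nat -> vert G) (x : nat) (v : vert G) :=
  fun y => if y == x then v else e y.

Fixpoint holds (G : sgraph) (e : nat -> vert G) (f : form) : Prop :=
  match f with
  | FAdj x y => adj (e x) (e y)
  | FEq x y => e x = e y
  | FNot g => ~ holds e g
  | FAnd g h => holds e g /\ holds e h
  | FOr g h => holds e g \/ holds e h
  | FEx x g => exists v : vert G, holds (upd e x v) g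
  | FAll x g => forall v : vert G, holds (upd e x v) g
  end.

Definition models (G : sgraph) (f : form) : Prop :=
  forall e : nat -> vert G, holds e f.

Definition defines_sub_conn (F : sgraph) (phi : form) (k : nat) : Prop :=
  forall G : sgraph, connected G -> k <= nverts G ->
    (models G phi <-> contains G F).

(* Let p = v(F)./2.  We build two connected graphs of arbitrary size, one
   containing F and one not, with an Ehrenfeucht-Fraisse back-and-forth system
   showing that no sentence of depth <= p or width < p tells them apart.
   Both are blow-ups of one template (classes of vertices forming cliques or
   independent sets, joined completely or not at all) with the same singleton
   classes; any other class has at least p vertices in both graphs, or p - 1
   vertices and an outside vertex that looks like one more member, which is
   enough in the last round.
   If F has a vertex of degree > p, the template is a clique attached to a long
   path: with a clique of size v(F) it contains F, with one of size p - 1 its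
   maximum degree is p.  Otherwise the template is a clique and many leaves
   attached to a hub: a connected F embeds in the version with a clique of size
   p - 1 only if F is a star with at most two leaves, i.e. P_2 or P_3.
   When v(F) = 1 the bound on the depth holds because, without truth constants,
   every sentence has a quantifier. *)

From mathcomp Require Import all_boot zify.
Set Implicit Arguments. Unset Strict Implicit. Unset Printing Implicit Defensive.

(** * First-order logic *)

Definition nvars (V : seq nat) : nat := size (undup V).

Definition others (x : nat) (V : seq nat) : seq nat := [seq y <- V | y != x].

Lemma others_mem x y W : y != x -> y \in W -> y \in others x W.
Proof. by rewrite mem_filter => ->. Qed.

Lemma others_subset x W : {subset others x W <= W}.
Proof. by move=> y; rewrite mem_filter => /andP[]. Qed.

Lemma nvars_others_le x V : nvars (others x V) <= nvars V.
Proof. by rewrite /nvars -filter_undup size_filter count_size. Qed.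

Lemma nvars_cons_le x V : nvars (x :: V) <= (nvars V).+1.
Proof. by rewrite /nvars /=; case: ifP. Qed.

Lemma nvars_cons_mem x V : x \in V -> nvars (x :: V) = nvars V.
Proof. by rewrite /nvars /= => ->. Qed.

Lemma nvars_others_lt x V : x \in V -> nvars (others x V) < nvars V.
Proof.
move=> xV; rewrite /nvars -filter_undup size_filter -(count_predC (predC1 x)) -addn1.
rewrite leq_add2l -has_count; apply/hasP; exists x; by rewrite ?mem_undup //= eqxx.
Qed.

Lemma fv_sub_vars f : {subset fv f <= vars f}.
Proof.
elim: f => [x z | x z | g IH | g IHg h IHh | g IHg h IHh | x g IH | x g IH] y //=;
  rewrite ?mem_cat ?inE.
- exact: IH.
- by case/orP=> [/IHg|/IHh] ->; rewrite ?orbT.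
- by case/orP=> [/IHg|/IHh] ->; rewrite ?orbT.
- by rewrite mem_filter => /andP[_ /IH ->]; rewrite orbT.
- by rewrite mem_filter => /andP[_ /IH ->]; rewrite orbT.
Qed.

Lemma fv_quant_sub x g V : {subset fv (FEx x g) <= V} -> {subset fv g <= x :: V}.
Proof.
move=> sub y yg; rewrite inE; case: eqVneq => //= yx.
by apply: sub; rewrite /= mem_filter yx.
Qed.

Lemma qfree_fv_neq_nil f : qdepth f = 0 -> fv f != [::].
Proof.
by elim: f => //= [g IHg h IHh | g IHg h IHh] /eqP;
  rewrite -leqn0 geq_max !leqn0 => /andP[/eqP/IHg]; case: (fv g).
Qed.

Lemma sentence_qdepth_gt0 phi : sentence phi -> 0 < qdepth phi.
Proof. by rewrite lt0n => sphi; apply: contra_neq (@qfree_fv_neq_nil phi) _; rewrite sphi. Qed.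

Lemma holds_eq_fv (G : sgraph) f (e e' : nat -> G) :
  {in fv f, e =1 e'} -> holds e f <-> holds e' f.
Proof.
elim: f e e' => /= [x y | x y | g IH | g IHg h IHh | g IHg h IHh | x g IH | x g IH] e e' ee';
  rewrite ?ee' ?inE ?eqxx ?orbT //.
- by rewrite (IH e e').
- by rewrite (IHg e e') ?(IHh e e') // => y yf; apply: ee'; rewrite mem_cat yf ?orbT.
- by rewrite (IHg e e') ?(IHh e e') // => y yf; apply: ee'; rewrite mem_cat yf ?orbT.
- have eqv v : holds (upd e x v) g <-> holds (upd e' x v) g.
    by apply: IH => y yg; rewrite /upd; case: eqVneq => // yx; apply: ee'; rewrite mem_filter yx.
  by split=> -[v /eqv]; exists v.
- have eqv v : holds (upd e x v) g <-> holds (upd e' x v) g.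
    by apply: IH => y yg; rewrite /upd; case: eqVneq => // yx; apply: ee'; rewrite mem_filter yx.
  by split=> hv v; apply/eqv.
Qed.

Lemma sentence_models (G : sgraph) f (e : nat -> G) :
  sentence f -> holds e f -> models G f.
Proof. by move=> sf hf e'; apply/(holds_eq_fv (e := e)) => // y; rewrite sf. Qed.

Definition partial_iso (G H : sgraph) (V : seq nat) (eG : nat -> G) (eH : nat -> H) :=
  forall y z, y \in V -> z \in V ->
    (eG y = eG z <-> eH y = eH z) /\ adj (eG y) (eG z) = adj (eH y) (eH z).

Lemma partial_iso_sym (G H : sgraph) V (eG : nat -> G) (eH : nat -> H) :
  partial_iso V eH eG -> partial_iso V eG eH.
Proof. by move=> iso y z yV zV; have [? ->] := iso y z yV zV; split; first by apply: iff_sym. Qed.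

Lemma partial_iso_holds (G H : sgraph) f V (eG : nat -> G) (eH : nat -> H) :
  qdepth f = 0 -> {subset fv f <= V} -> partial_iso V eG eH ->
  holds eG f <-> holds eH f.
Proof.
elim: f => //= [x y | x y | g IH | g IHg h IHh | g IHg h IHh] + sub iso.
- by have [_ ->] := iso x y (sub _ (mem_head _ _)) (sub _ (mem_last _ _)).
- by have [-> _] := iso x y (sub _ (mem_head _ _)) (sub _ (mem_last _ _)).
- by move/IH => /(_ sub iso) ->.
- move/eqP; rewrite -leqn0 geq_max !leqn0 => /andP[/eqP qg /eqP qh].
  rewrite (IHg qg) ?(IHh qh) // => y yf; apply: sub; by rewrite mem_cat yf ?orbT.
- move/eqP; rewrite -leqn0 geq_max !leqn0 => /andP[/eqP qg /eqP qh].
  rewrite (IHg qg) ?(IHh qh) // => y yf; apply: sub; by rewrite mem_cat yf ?orbT.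
Qed.

(** * Back-and-forth systems *)

Definition zigzag (A B : Type) (R : A -> B -> Prop) : Prop :=
  (forall a, exists b, R a b) /\ (forall b, exists a, R a b).

Definition quant_equiv (A B : Type) (P : A -> Prop) (Q : B -> Prop) : Prop :=
  ((exists a, P a) <-> (exists b, Q b)) /\ ((forall a, P a) <-> (forall b, Q b)).

Lemma zigzag_quant (A B : Type) (R : A -> B -> Prop) (P : A -> Prop) (Q : B -> Prop) :
  zigzag R -> (forall a b, R a b -> P a <-> Q b) -> quant_equiv P Q.
Proof.
move=> [forth back] PQ; split; split.
- by move=> [a Pa]; have [b /PQ abR] := forth a; exists b; apply/abR.
- by move=> [b Qb]; have [a /PQ abR] := back b; exists a; apply/abR.
- by move=> allP b; have [a /PQ <-] := back b.
- by move=> allQ a; have [b /PQ ->] := forth a.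
Qed.

Section BackAndForth.
Variables (G H : sgraph) (p : nat).
Variable good : seq nat -> (nat -> G) -> (nat -> H) -> Prop.

Definition extensions (R : seq nat -> (nat -> G) -> (nat -> H) -> Prop)
    x V (eG : nat -> G) (eH : nat -> H) :=
  zigzag (fun g h => R (x :: V) (upd eG x g) (upd eH x h)).

(* [good] positions of a game with [p] rounds (or pebbles): a move can be
   answered within [good] while at most [p - 2] other pebbles are on the board,
   and by a mere partial isomorphism (the last round) while at most [p - 1]. *)
Hypothesis good_partial_iso : forall V eG eH, good V eG eH -> partial_iso V eG eH.
Hypothesis good_extend : forall x V eG eH, good V eG eH ->
  (nvars (others x V)).+1 < p -> extensions good x V eG eH.
Hypothesis good_extend_last : forall x V eG eH, good V eG eH ->
  nvars (others x V) < p -> extensions (@partial_iso G H) x V eG eH.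

Let quant_step x g (eG : nat -> G) (eH : nat -> H) :=
  quant_equiv (fun a => holds (upd eG x a) g) (fun b => holds (upd eH x b) g).

Definition depth_invariant f := forall V eG eH,
  {subset fv f <= V} -> nvars V + qdepth f <= p -> good V eG eH ->
  holds eG f <-> holds eH f.

Lemma good_quant_depth x g V eG eH :
  depth_invariant g -> {subset fv g <= x :: V} -> nvars V + (qdepth g).+1 <= p ->
  good V eG eH -> quant_step x g eG eH.
Proof.
move=> IH subg dp gd; rewrite /quant_step; have := nvars_others_le x V; have := nvars_cons_le x V.
have [qg0 | qg_pos] := posnP (qdepth g) => le_cons le_others.
- apply: (zigzag_quant (good_extend_last (x := x) gd _)) => [|a b]; first lia.
  exact: partial_iso_holds qg0 subg.
- apply: (zigzag_quant (good_extend (x := x) gd _)) => [|a b /IH]; first lia.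
  by apply=> //; lia.
Qed.

Lemma good_holds_depth f V eG eH :
  {subset fv f <= V} -> nvars V + qdepth f <= p -> good V eG eH ->
  holds eG f <-> holds eH f.
Proof.
elim: f V eG eH => [x y | x y | g IH | g IHg h IHh | g IHg h IHh | x g IH | x g IH]
  V eG eH sub /= dp gd; try by apply: partial_iso_holds sub (good_partial_iso gd).
- by rewrite (IH V eG eH).
- rewrite (IHg V eG eH) ?(IHh V eG eH) //;
    try by apply: leq_trans dp; rewrite leq_add2l ?leq_maxl ?leq_maxr.
  + by move=> y yf; apply: sub; rewrite /= mem_cat yf orbT.
  + by move=> y yf; apply: sub; rewrite /= mem_cat yf.
- rewrite (IHg V eG eH) ?(IHh V eG eH) //;
    try by apply: leq_trans dp; rewrite leq_add2l ?leq_maxl ?leq_maxr.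
  + by move=> y yf; apply: sub; rewrite /= mem_cat yf orbT.
  + by move=> y yf; apply: sub; rewrite /= mem_cat yf.
all: by case: (good_quant_depth IH (fv_quant_sub sub) dp gd).
Qed.

Definition width_invariant f := forall V eG eH,
  {subset vars f <= V} -> nvars V < p -> good V eG eH ->
  holds eG f <-> holds eH f.

Lemma good_quant_width x g V eG eH :
  width_invariant g -> {subset vars g <= x :: V} -> x \in V -> nvars V < p ->
  good V eG eH -> quant_step x g eG eH.
Proof.
move=> IH subg xV wp gd; rewrite /quant_step; have := nvars_others_lt xV; have := nvars_cons_mem xV.
move=> eq_cons lt_others.
apply: (zigzag_quant (good_extend (x := x) gd _)) => [|a b /IH]; first lia.
by apply=> //; rewrite eq_cons.
Qed.

Lemma good_holds_width f V eG eH :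
  {subset vars f <= V} -> nvars V < p -> good V eG eH ->
  holds eG f <-> holds eH f.
Proof.
elim: f V eG eH => [x y | x y | g IH | g IHg h IHh | g IHg h IHh | x g IH | x g IH]
  V eG eH sub /= wp gd;
  try by apply: partial_iso_holds (fun y yf => sub y (fv_sub_vars yf)) (good_partial_iso gd).
- by rewrite (IH V eG eH).
- rewrite (IHg V eG eH) ?(IHh V eG eH) // => y yf; apply: sub; by rewrite /= mem_cat yf ?orbT.
- rewrite (IHg V eG eH) ?(IHh V eG eH) // => y yf; apply: sub; by rewrite /= mem_cat yf ?orbT.
all: have subg : {subset vars g <= x :: V} by move=> y yg; rewrite inE sub ?orbT //= inE yg orbT.
all: by case: (good_quant_width IH subg (sub _ (mem_head _ _)) wp gd).
Qed.

End BackAndForth.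

(** * Blow-ups *)

Section Blowup.
Variables (K V : finType) (cls : V -> K) (clq : pred K) (T : rel K).
Hypothesis T_sym : symmetric T.

Definition blowup_adj : rel V := fun a b =>
  if cls a == cls b then (a != b) && clq (cls a) else T (cls a) (cls b).

Lemma blowup_adj_sym : symmetric blowup_adj.
Proof.
move=> a b; rewrite /blowup_adj eq_sym; case: eqP => [-> | _]; last exact: T_sym.
by rewrite eq_sym.
Qed.

Lemma blowup_adj_irrefl : irreflexive blowup_adj.
Proof. by move=> a; rewrite /blowup_adj !eqxx. Qed.

Definition blowup : sgraph := SGraph blowup_adj_sym blowup_adj_irrefl.

End Blowup.

Definition class_of (K V : finType) (cls : V -> K) (k : K) : {pred V} :=
  [pred a | cls a == k].

Definition singleton_class (K V : finType) (cls : V -> K) (k : K) : Prop :=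
  (exists a, cls a = k) /\ (forall a b, cls a = k -> cls b = k -> a = b).

(* A class of size [p - 1] is as good as one of size [p] if some outside vertex
   [z] sees the whole class as a class member would: in the last round, [z]
   answers a fresh vertex of the class. *)
Definition ample (K V : finType) (cls : V -> K) (clq : pred K) (T : rel K)
    (p : nat) (k : K) : Prop :=
  p <= #|class_of cls k| \/
  (p <= #|class_of cls k|.+1 /\
   exists2 z, cls z != k & forall a, cls a = k -> blowup_adj cls clq T z a = clq k).

Lemma fresh_or_covered (A : finType) (P : pred A) (s : seq A) :
  #|s| <= #|P| -> (exists2 a, a \in P & a \notin s) \/ P =i s.
Proof.
move=> le_sP; case: (pickP [pred a | (a \in P) && (a \notin s)]) => [a /andP[] | none].
  by left; exists a.
have covered : P \subset s by apply/subsetP => a Pa; have /= := none a; rewrite Pa => /negbFE.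
have card_eq : #|P| = #|s| by apply/eqP; rewrite eqn_leq subset_leq_card.
by right; apply/(subset_cardP card_eq).
Qed.

Lemma exists_fresh (A : finType) (P : pred A) (s : seq A) :
  #|s| < #|P| -> exists2 a, a \in P & a \notin s.
Proof.
move=> lt_sP; have [// | /eq_card eq_Ps] := fresh_or_covered (ltnW lt_sP).
by rewrite eq_Ps ltnn in lt_sP.
Qed.

Lemma card_map_le (A : finType) (e : nat -> A) (U : seq nat) : #|map e U| <= nvars U.
Proof.
rewrite (@eq_card _ _ (mem (map e (undup U)))) => [|a].
  by rewrite (leq_trans (card_size _)) ?size_map.
by apply/mapP/mapP=> -[y yU ->]; exists y; rewrite ?mem_undup in yU *.
Qed.

Section BlowupGame.
Variables (K : finType) (clq : pred K) (T : rel K).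
Hypothesis T_sym : symmetric T.
Variables (V1 V2 : finType) (c1 : V1 -> K) (c2 : V2 -> K).
Local Notation G1 := (blowup c1 clq T_sym).
Local Notation G2 := (blowup c2 clq T_sym).

Definition class_match (W : seq nat) (e1 : nat -> G1) (e2 : nat -> G2) : Prop :=
  {in W, forall y, c1 (e1 y) = c2 (e2 y)} /\
  {in W &, forall y z, e1 y = e1 z <-> e2 y = e2 z}.

Lemma class_match_partial_iso W (e1 : nat -> G1) (e2 : nat -> G2) :
  class_match W e1 e2 -> partial_iso W e1 e2.
Proof.
move=> [cls eqv] y z yW zW; split; first exact: eqv.
rewrite /= /blowup_adj !cls //; congr (if _ then _ && _ else _).
by apply/negb_inj; rewrite !negbK; apply/eqP/eqP => /eqv; apply.
Qed.

Lemma class_match_upd W (e1 : nat -> G1) (e2 : nat -> G2) x g h :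
  class_match W e1 e2 -> c1 g = c2 h ->
  {in others x W, forall y, g = e1 y <-> h = e2 y} ->
  class_match (x :: W) (upd e1 x g) (upd e2 x h).
Proof.
move=> [cls eqv] gh ghW; split=> [y | y z]; rewrite ?inE /upd.
  by case: eqVneq => //= _; apply: cls.
case: (eqVneq y x) => [-> | yx]; case: (eqVneq z x) => [-> | zx] //= yW zW.
- exact/ghW/others_mem.
- by split=> /esym/(ghW y (others_mem yx yW)) ->.
- exact: eqv.
Qed.

Lemma class_match_upd_pebbled W (e1 : nat -> G1) (e2 : nat -> G2) x y :
  class_match W e1 e2 -> y \in others x W ->
  class_match (x :: W) (upd e1 x (e1 y)) (upd e2 x (e2 y)).
Proof.
move=> cm /others_subset yW; apply: class_match_upd => //; first exact: cm.1.
by move=> z /others_subset zW; apply: cm.2.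
Qed.

Lemma class_match_upd_fresh W (e1 : nat -> G1) (e2 : nat -> G2) x g h :
  class_match W e1 e2 -> c1 g = c2 h ->
  g \notin map e1 (others x W) -> h \notin map e2 (others x W) ->
  class_match (x :: W) (upd e1 x g) (upd e2 x h).
Proof.
move=> cm gh gU hU; apply: class_match_upd => // y yU.
by split=> ge; [case/mapP: gU | case/mapP: hU]; exists y.
Qed.

Lemma fresh_in_class U (e1 : nat -> G1) (e2 : nat -> G2) (g : G1) :
  {in U, forall y, c1 (e1 y) = c2 (e2 y)} -> g \notin map e1 U ->
  (singleton_class c1 (c1 g) /\ singleton_class c2 (c1 g)) \/
    #|map e2 U| < #|class_of c2 (c1 g)| ->
  exists2 h, c2 h = c1 g & h \notin map e2 U.
Proof.
move=> cls gU [[[_ uniq1] [[h hk] _]] | lt_map].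
  exists h => //; apply: contra gU => /mapP[y yU hy]; apply/mapP; exists y => //.
  by apply: uniq1; rewrite // cls // -hy.
by have [h /eqP hk hU] := exists_fresh lt_map; exists h.
Qed.

Lemma imitator_partial_iso W (e1 : nat -> G1) (e2 : nat -> G2) x (g : G1) (z : G2) :
  class_match W e1 e2 -> g \notin map e1 (others x W) -> c2 z != c1 g ->
  (forall a, c2 a = c1 g -> blowup_adj c2 clq T z a = clq (c1 g)) ->
  {in others x W, forall y, c2 (e2 y) = c1 g} ->
  partial_iso (x :: W) (upd e1 x g) (upd e2 x z).
Proof.
move=> cm gU zk zadj Uk.
have new_vs_old y : y \in others x W ->
    (g = e1 y <-> z = e2 y) /\ adj g (e1 y) = adj z (e2 y).
  move=> yU; have cy := cm.1 y (others_subset yU).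
  have gy : g != e1 y by apply: contra gU => /eqP ->; apply: map_f.
  have zy : z != e2 y by apply: contra zk => /eqP ->; rewrite Uk.
  split; first by split=> /eqP; rewrite ?(negbTE gy) ?(negbTE zy).
  by rewrite /= zadj ?Uk // /blowup_adj cy Uk // eqxx gy.
move=> y w; rewrite !inE /upd.
case: (eqVneq y x) => [-> | yx]; case: (eqVneq w x) => [-> | wx] // yW wW.
- by rewrite !adj_irrefl.
- by apply/new_vs_old/others_mem.
- have [eqv adjE] := new_vs_old y (others_mem yx yW).
  by split; [split=> /esym/eqv/esym | rewrite adj_sym adjE adj_sym].
- exact: (class_match_partial_iso cm).
Qed.

Variable p : nat.
Hypothesis class_forth :
  forall k, (singleton_class c1 k /\ singleton_class c2 k) \/ ample c2 clq T p k.

Lemma class_match_forth W (e1 : nat -> G1) (e2 : nat -> G2) x g :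
  class_match W e1 e2 -> (nvars (others x W)).+1 < p ->
  exists h, class_match (x :: W) (upd e1 x g) (upd e2 x h).
Proof.
move=> cm lt_p.
have [/mapP[y yU ->] | gU] := boolP (g \in map e1 (others x W)).
  by exists (e2 y); apply: class_match_upd_pebbled.
have [h hk hU] : exists2 h, c2 h = c1 g & h \notin map e2 (others x W).
  have le_map : #|map e2 (others x W)| <= nvars (others x W) by apply: card_map_le.
  apply: fresh_in_class gU _ => [y /others_subset | ]; first exact: cm.1.
  case: (class_forth (c1 g)) => [single | [big | [le_p _]]]; [by left | right; lia..].
by exists h; apply: class_match_upd_fresh.
Qed.

Lemma class_match_forth_last W (e1 : nat -> G1) (e2 : nat -> G2) x g :
  class_match W e1 e2 -> nvars (others x W) < p ->
  exists h, partial_iso (x :: W) (upd e1 x g) (upd e2 x h).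
Proof.
move=> cm lt_p; set U := others x W in lt_p *.
have le_map : #|map e2 U| <= nvars U by apply: card_map_le.
have clsU : {in U, forall y, c1 (e1 y) = c2 (e2 y)} by move=> y /others_subset; apply: cm.1.
have [/mapP[y yU ->] | gU] := boolP (g \in map e1 U).
  by exists (e2 y); apply/class_match_partial_iso/class_match_upd_pebbled.
have respond_fresh : (exists2 h : G2, c2 h = c1 g & h \notin map e2 U) ->
    exists h, partial_iso (x :: W) (upd e1 x g) (upd e2 x h).
  by case=> h hk hU; exists h; apply/class_match_partial_iso/class_match_upd_fresh.
have [single | [big | [le_p [z zk zadj]]]] := class_forth (c1 g).
- by apply/respond_fresh/(fresh_in_class clsU gU); left.
- by apply/respond_fresh/(fresh_in_class clsU gU); right; lia.
have le_class : #|map e2 U| <= #|class_of c2 (c1 g)| by lia.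
have [[h /eqP hk hU] | class_eq] := fresh_or_covered le_class.
  by apply: respond_fresh; exists h.
by exists z; apply: imitator_partial_iso => // y yU; move: (map_f e2 yU); rewrite -class_eq => /eqP.
Qed.

End BlowupGame.

Arguments class_match {K clq T T_sym V1 V2 c1 c2}.

Lemma class_match_sym (K : finType) (clq : pred K) (T : rel K) (T_sym : symmetric T)
    (V1 V2 : finType) (c1 : V1 -> K) (c2 : V2 -> K) W
    (e1 : nat -> blowup c1 clq T_sym) (e2 : nat -> blowup c2 clq T_sym) :
  class_match W e1 e2 -> class_match W e2 e1.
Proof.
case=> cls eqv; split=> [y yW | y z yW zW]; first by rewrite cls.
exact: iff_sym (eqv y z yW zW).
Qed.

Section BlowupPair.
Variables (K : finType) (clq : pred K) (T : rel K).
Hypothesis T_sym : symmetric T.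
Variables (V1 V2 : finType) (c1 : V1 -> K) (c2 : V2 -> K) (p : nat).
Hypothesis classes_alike : forall k,
  (singleton_class c1 k /\ singleton_class c2 k) \/ (ample c1 clq T p k /\ ample c2 clq T p k).
Local Notation G1 := (blowup c1 clq T_sym).
Local Notation G2 := (blowup c2 clq T_sym).

Let classes_forth k : (singleton_class c1 k /\ singleton_class c2 k) \/ ample c2 clq T p k.
Proof. by case: (classes_alike k) => [|[_]]; [left | right]. Qed.

Let classes_back k : (singleton_class c2 k /\ singleton_class c1 k) \/ ample c1 clq T p k.
Proof. by case: (classes_alike k) => [[]|[]]; [left | right]. Qed.

Lemma class_match_extensions x W (e1 : nat -> G1) (e2 : nat -> G2) :
  class_match W e1 e2 -> (nvars (others x W)).+1 < p ->
  extensions class_match x W e1 e2.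
Proof.
move=> cm lt_p; split=> [g | h]; first exact: (class_match_forth classes_forth g cm lt_p).
have [g /class_match_sym] := class_match_forth classes_back h (class_match_sym cm) lt_p.
by exists g.
Qed.

Lemma class_match_extensions_last x W (e1 : nat -> G1) (e2 : nat -> G2) :
  class_match W e1 e2 -> nvars (others x W) < p ->
  extensions (@partial_iso G1 G2) x W e1 e2.
Proof.
move=> cm lt_p; split=> [g | h]; first exact: (class_match_forth_last classes_forth g cm lt_p).
have [g /partial_iso_sym] := class_match_forth_last classes_back h (class_match_sym cm) lt_p.
by exists g.
Qed.

Lemma blowup_models_iff phi (a : G1) (b : G2) :
  c1 a = c2 b -> sentence phi -> qdepth phi <= p \/ width phi < p ->
  models G1 phi <-> models G2 phi.
Proof.
move=> ab sphi small.
have cm W : class_match W (fun=> a) (fun=> b) by split.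
have equiv : holds (fun=> a) phi <-> holds (fun=> b) phi.
  have iso := @class_match_partial_iso _ clq _ T_sym _ _ c1 c2.
  case: small => small.
  - by apply: (good_holds_depth iso class_match_extensions class_match_extensions_last
      (V := [::])); rewrite ?sphi.
  - by apply: (good_holds_width iso class_match_extensions (V := vars phi)).
by split=> [/(_ (fun=> a)) | /(_ (fun=> b))] /equiv; apply: sentence_models.
Qed.

Lemma defining_sentence_large F phi k (a : G1) (b : G2) :
  c1 a = c2 b -> sentence phi -> defines_sub_conn F phi k ->
  connected G1 -> k <= nverts G1 -> contains G1 F ->
  connected G2 -> k <= nverts G2 -> ~ contains G2 F ->
  p < qdepth phi /\ p <= width phi.
Proof.
move=> ab sphi def cG1 kG1 inG1 cG2 kG2 notin2.
have differ : ~ (models G1 phi <-> models G2 phi).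
  by move=> eqv; apply/notin2/(def _ cG2 kG2)/eqv/(def _ cG1 kG1).
split; [rewrite ltnNge | rewrite leqNgt]; apply/negP => small; apply: differ.
  exact: blowup_models_iff ab sphi (or_introl small).
exact: blowup_models_iff ab sphi (or_intror small).
Qed.

End BlowupPair.

Definition degree (G : sgraph) (v : G) : nat := #|[pred y | adj v y]|.

Lemma degree_le_embedding (F G : sgraph) (f : F -> G) :
  injective f -> (forall x y, adj x y -> adj (f x) (f y)) ->
  forall v, degree v <= degree (f v).
Proof.
move=> f_inj f_adj v; rewrite /degree -(card_imset _ f_inj).
by apply/subset_leq_card/subsetP => _ /imsetP[y /= vy ->]; rewrite inE f_adj.
Qed.

Lemma degree_le_inj (G : sgraph) (v : G) (B : finType) (f : G -> B) :
  {in [pred y | adj v y] &, injective f} -> degree v <= #|B|.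
Proof. exact: leq_card_in. Qed.

Lemma connected_of_hub (G : sgraph) (h : G) : (forall z, connect (@adj G) z h) -> connected G.
Proof.
move=> to_h; split; first by apply/card_gt0P; exists h.
move=> x y; apply: connect_trans (to_h x) _.
by rewrite (sym_connect_sym (@adj_sym G)).
Qed.

Lemma connected_has_neighbor (F : sgraph) (x : F) :
  connected F -> 1 < #|F| -> exists y, adj x y.
Proof.
move=> [_ conn] /card_gt1P[a [b [_ _ ab]]].
have [y yx] : exists y : F, y != x.
  by case: (eqVneq a x) => [ax|]; [exists b; rewrite -ax eq_sym | exists a].
move/connectP: (conn x y) => -[[|z s] /= xs y_last]; first by rewrite y_last eqxx in yx.
by exists z; case/andP: xs.
Qed.

Lemma connected_closed (G : sgraph) (S : pred G) (x : G) :
  connected G -> x \in S -> (forall a b, a \in S -> adj a b -> b \in S) -> forall y, y \in S.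
Proof.
move=> [_ conn] xS S_closed y; rewrite -(closed_connect _ (conn x y)) //.
by move=> a b ab; apply/idP/idP => [/S_closed|/S_closed]; apply; rewrite // adj_sym.
Qed.

Lemma isomorphic_path_of_seq (F : sgraph) (x0 : F) (s : seq F) :
  uniq s -> size s = #|F| ->
  (forall i j, i < size s -> j < size s ->
     adj (nth x0 s i) (nth x0 s j) = (i.+1 == j) || (j.+1 == i)) ->
  isomorphic F (P (size s)).
Proof.
move=> s_uniq s_size s_adj.
have s_all x : x \in s.
  apply: contraT => xs; have /card_uniqP : uniq (x :: s) by rewrite /= xs.
  by move=> card_xs; have := max_card (mem (x :: s)); rewrite card_xs /= s_size ltnn.
have idx_lt x : index x s < size s by rewrite index_mem.
exists (fun x => Ordinal (idx_lt x)); split.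
  exists (fun i : 'I_(size s) => nth x0 s i) => [x | i]; first by rewrite /= nth_index.
  by apply: val_inj; rewrite /= index_uniq.
move=> x y; rewrite /= /path_adj /=.
by rewrite -[in RHS](nth_index x0 (s_all x)) -[in RHS](nth_index x0 (s_all y)) s_adj.
Qed.

Section Star.
Variables (F : sgraph) (v : F) (X : {set F}).
Hypotheses (vX : v \notin X) (X_v : {in X, forall x, adj x v})
  (X_pendant : {in X, forall x y, adj x y -> y = v}) (star : [set: F] = v |: X).

Lemma star_card : #|F| = #|X|.+1.
Proof. by rewrite -cardsT star cardsU1 vX. Qed.

Lemma star_pendants_indep : {in X &, forall x y, ~~ adj x y}.
Proof. by move=> x y xX yX; apply/negP => /(X_pendant xX) yv; move: vX; rewrite -yv yX. Qed.

Lemma star_isomorphic_P2 : #|X| = 1 -> isomorphic F (P 2).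
Proof.
move/eqP/cards1P=> [a X_a]; have aX : a \in X by rewrite X_a set11.
apply: (@isomorphic_path_of_seq F v [:: v; a]) => /=.
- by rewrite inE andbT; apply: contraNneq vX => ->.
- by rewrite star_card X_a cards1.
- by move=> [|[|i]] [|[|j]] //= _ _; rewrite ?adj_irrefl // ?(adj_sym v) X_v.
Qed.

Lemma star_isomorphic_P3 : #|X| = 2 -> isomorphic F (P 3).
Proof.
move/eqP/cards2P=> [a [b [ab X_ab]]].
have [aX bX] : a \in X /\ b \in X by rewrite X_ab !inE !eqxx orbT.
have [va vb] : v != a /\ v != b by split; apply: contraNneq vX => ->.
apply: (@isomorphic_path_of_seq F v [:: a; v; b]) => /=.
- by rewrite !inE negb_or ab eq_sym va vb.
- by rewrite star_card X_ab cards2 ab.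
- move=> [|[|[|i]]] [|[|[|j]]] //= _ _; rewrite ?adj_irrefl ?X_v //;
    rewrite ?(adj_sym v) ?X_v ?(negbTE (star_pendants_indep _ _)) //.
Qed.

End Star.

(** * Two template graphs *)

Lemma card_class_ge (K V A : finType) (cls : V -> K) k (f : A -> V) :
  injective f -> (forall a, cls (f a) = k) -> #|A| <= #|class_of cls k|.
Proof.
move=> f_inj f_cls; rewrite -(card_imset _ f_inj).
by apply/subset_leq_card/subsetP => _ /imsetP[a _ ->]; rewrite inE f_cls.
Qed.

Lemma blowup_contains_clique (K V : finType) (cls : V -> K) (clq : pred K) (T : rel K)
    (T_sym : symmetric T) (F : sgraph) (f : F -> V) k :
  injective f -> (forall x, cls (f x) = k) -> clq k -> contains (blowup cls clq T_sym) F.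
Proof.
move=> f_inj f_cls clq_k; exists f; split=> // x y xy.
rewrite /= /blowup_adj !f_cls eqxx clq_k andbT (inj_eq f_inj).
by apply: contraTneq xy => ->; rewrite adj_irrefl.
Qed.

Definition is_none (X : finType) : pred (option X) := fun c => c == None.

(* [clique_path m N] is K_m with all its vertices joined to the first vertex of
   a path P_N; the clique is the class [None], the path vertices are singleton
   classes. *)
Definition tail_class (m N : nat) (v : 'I_m + 'I_N) : option 'I_N :=
  if v is inr i then Some i else None.

Definition tail_rel (N : nat) : rel (option 'I_N) := fun c d =>
  match c, d with
  | None, Some j | Some j, None => j == 0 :> nat
  | Some i, Some j => (i.+1 == j) || (j.+1 == i)
  | None, None => false
  end.

Lemma tail_rel_sym N : symmetric (@tail_rel N).
Proof. by case=> [i|] [j|] //=; rewrite orbC. Qed.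

Definition clique_path (m N : nat) : sgraph :=
  blowup (@tail_class m N) (@is_none _) (@tail_rel_sym N).

Lemma clique_path_adj m N (a b : clique_path m N) :
  adj a b = match a, b with
            | inl i, inl j => i != j
            | inl _, inr j | inr j, inl _ => j == 0 :> nat
            | inr i, inr j => (i.+1 == j) || (j.+1 == i)
            end.
Proof.
case: a b => [i|i] [j|j]; rewrite /= /blowup_adj //= ?andbT.
  by rewrite (inj_eq (@inl_inj _ _)).
by case: eqP => [[->]|] //=; rewrite /is_none andbF orbb gtn_eqF.
Qed.

Lemma clique_path_degree m N (a : clique_path m N) : 0 < m -> degree a <= m.+1.
Proof.
move=> m_gt0; pose f (z : clique_path m N) := if z is inl j then Some j else None.
have via_f : {in [pred z | adj a z] &, injective f} -> degree a <= m.+1.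
  by move/degree_le_inj; rewrite card_option card_ord.
case: a via_f => [i | j] via_f.
  apply: via_f => -[z1|z1] [z2|z2]; rewrite !inE !clique_path_adj //=; first by move=> _ _ [->].
  by move=> adj1 adj2 _; have -> : z1 = z2 by apply: val_inj; move: adj1 adj2 => /=; lia.
have [j_0 | j_gt0] := posnP j.
  apply: via_f => -[z1|z1] [z2|z2]; rewrite !inE !clique_path_adj j_0 //=; first by move=> _ _ [->].
  by move=> adj1 adj2 _; have -> : z1 = z2 by apply: val_inj; move: adj1 adj2 => /=; lia.
pose g (z : clique_path m N) := if z is inr k then j < k else false.
suff : degree (inr j : clique_path m N) <= #|{: bool}| by rewrite card_bool; lia.
apply: (degree_le_inj (f := g)) => -[z1|z1] [z2|z2];
  rewrite !inE !clique_path_adj ?eqn0Ngt ?j_gt0 //=.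
move=> adj1 adj2 g12; have -> // : z1 = z2.
by apply: val_inj; move: adj1 adj2 g12; rewrite /g /=; lia.
Qed.

Lemma clique_path_connected m N : connected (clique_path m N.+1).
Proof.
apply: (@connected_of_hub (clique_path m N.+1) (inr ord0)) => -[j | [i lt_iN]].
  by apply: connect1; rewrite clique_path_adj.
elim: i lt_iN => [|i IH] lt_iN; first by rewrite (_ : Ordinal lt_iN = ord0) //; apply: val_inj.
apply: connect_trans (IH (ltnW lt_iN)); apply: connect1.
by rewrite clique_path_adj /= eqxx orbT.
Qed.

Lemma clique_path_nverts m N : nverts (clique_path m N) = m + N.
Proof. by rewrite /nverts card_sum !card_ord. Qed.

Lemma clique_path_contains (F : sgraph) N : contains (clique_path #|F| N) F.
Proof.
apply: (blowup_contains_clique _ (f := fun x => inl (enum_rank x)) (k := None)) => //.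
by move=> x y [/enum_rank_inj].
Qed.

Lemma tail_clique_card m N : m <= #|class_of (@tail_class m N) None|.
Proof. by rewrite -{1}(card_ord m); apply: card_class_ge (@inl_inj _ _) _. Qed.

Lemma clique_path_classes l p N : 0 < p <= l ->
  forall k, (singleton_class (@tail_class l N.+1) k /\ singleton_class (@tail_class p.-1 N.+1) k)
    \/ (ample (@tail_class l N.+1) (@is_none _) (@tail_rel N.+1) p k /\
        ample (@tail_class p.-1 N.+1) (@is_none _) (@tail_rel N.+1) p k).
Proof.
case/andP=> p_gt0 le_pl; case=> [i|].
- left; split; split; first [by exists (inr i) | by move=> [a|a] [b|b] /=; congruence].
- right; split; first by left; apply: leq_trans le_pl (tail_clique_card _ _).
  right; split; first by have := tail_clique_card p.-1 N.+1; lia.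
  by exists (inr ord0) => // -[a|a].
Qed.

Lemma clique_path_not_contains (F : sgraph) m N :
  0 < m -> (exists v : F, m.+1 < degree v) -> ~ contains (clique_path m N) F.
Proof.
move=> m_gt0 [v deg_v] [f [f_inj f_adj]].
have := leq_trans (degree_le_embedding f_inj f_adj v) (clique_path_degree (f v) m_gt0).
by rewrite leqNgt deg_v.
Qed.

(* [clique_star m N] is K_m and N leaves, all joined to a hub vertex; the
   classes are [None] (clique), [Some true] (hub) and [Some false] (leaves). *)
Definition star_class (m N : nat) (v : 'I_m + option 'I_N) : option bool :=
  match v with inl _ => None | inr None => Some true | inr (Some _) => Some false end.

Definition star_rel : rel (option bool) := fun c d =>
  match c, d with
  | None, Some true | Some true, None | Some true, Some false | Some false, Some true => true
  | _, _ => false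
  end.

Lemma star_rel_sym : symmetric star_rel.
Proof. by case=> [[]|] [[]|]. Qed.

Definition clique_star (m N : nat) : sgraph :=
  blowup (@star_class m N) (@is_none _) star_rel_sym.

Lemma clique_star_connected m N : connected (clique_star m N).
Proof.
by apply: (@connected_of_hub (clique_star m N) (inr None)) => -[j | [i|]] //; apply: connect1.
Qed.

Lemma clique_star_nverts m N : nverts (clique_star m N) = m + N.+1.
Proof. by rewrite /nverts card_sum card_option !card_ord. Qed.

Lemma clique_star_contains (F : sgraph) N : contains (clique_star #|F| N) F.
Proof.
apply: (blowup_contains_clique _ (f := fun x => inl (enum_rank x)) (k := None)) => //.
by move=> x y [/enum_rank_inj].
Qed.

Lemma clique_star_classes l p N : 0 < p <= l -> p <= N ->
  forall k, (singleton_class (@star_class l N) k /\ singleton_class (@star_class p.-1 N) k)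
    \/ (ample (@star_class l N) (@is_none _) star_rel p k /\
        ample (@star_class p.-1 N) (@is_none _) star_rel p k).
Proof.
case/andP=> p_gt0 le_pl le_pN [[]|].
- left; split; split; first [by exists (inr None) | by move=> [a|[a|]] [b|[b|]]].
- have leaves_card m : N <= #|class_of (@star_class m N) (Some false)|.
    by rewrite -{1}(card_ord N); apply: (card_class_ge (f := fun i => inr (Some i))) => // a b [->].
  by right; split; left; apply: leq_trans le_pN (leaves_card _).
- have clique_card m : m <= #|class_of (@star_class m N) None|.
    by rewrite -{1}(card_ord m); apply: card_class_ge (@inl_inj _ _) _.
  right; split; first by left; apply: leq_trans le_pl (clique_card _).
  right; split; first by have := clique_card p.-1; lia.
  by exists (inr None) => // -[a|[a|]].
Qed.

Lemma clique_star_leaf_adj m N (a b : clique_star m N) :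
  star_class a = Some false -> adj a b -> b = inr None.
Proof.
by case: a => [a|[a|]] //= _; case: b => [b|[b|]] //=; rewrite /blowup_adj /= andbF.
Qed.

Lemma clique_star_pendants (F : sgraph) m N (f : F -> clique_star m N) :
  injective f -> (forall x y, adj x y -> adj (f x) (f y)) -> connected F -> m.+1 < #|F| ->
  exists v (X : {set F}), [/\ #|F| <= #|X| + m.+1, v \notin X,
    {in X, forall x, adj x v} & {in X, forall x y, adj x y -> y = v}].
Proof.
move=> f_inj f_adj F_conn lt_mF; have F_gt1 : 1 < #|F| by apply: leq_ltn_trans lt_mF.
pose X := [set x | star_class (f x) == Some false].
have F_le : #|F| <= #|X| + m.+1.
  rewrite -(cardsC X) leq_add2l.
  pose g (z : clique_star m N) := if z is inl j then Some j else None.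
  have : {in ~: X &, injective (g \o f)}.
    move=> x1 x2; rewrite !inE /=.
    case e1: (f x1) => [a1|[a1|]]; case e2: (f x2) => [a2|[a2|]] //= _ _.
    - by case=> a12; apply: f_inj; rewrite e1 e2 a12.
    - by move=> _; apply: f_inj; rewrite e1 e2.
  by move/leq_card_in; rewrite card_option card_ord.
have [x0 x0X] : exists x0, x0 \in X.
  by apply/set0Pn; apply: contraTneq lt_mF => X0; rewrite -leqNgt (leq_trans F_le) // X0 cards0.
have leaf_adj x y : x \in X -> adj x y -> f y = inr None.
  by rewrite inE => /eqP xX /f_adj; apply: clique_star_leaf_adj.
have [v x0v] := connected_has_neighbor x0 F_conn F_gt1.
have to_v : {in X, forall x y, adj x y -> y = v}.
  by move=> x xX y /(leaf_adj _ _ xX) fy; apply: f_inj; rewrite fy (leaf_adj _ _ x0X x0v).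
exists v, X; split=> //; first by rewrite inE (leaf_adj _ _ x0X x0v).
by move=> x xX; have [y xy] := connected_has_neighbor x F_conn F_gt1; rewrite -(to_v x xX y xy).
Qed.

Lemma clique_star_not_contains (F : sgraph) N :
  connected F -> 1 < #|F| -> ~ isomorphic F (P 2) -> ~ isomorphic F (P 3) ->
  (#|F| <= 3 \/ forall v : F, degree v <= #|F|./2) ->
  ~ contains (clique_star (#|F|./2).-1 N) F.
Proof.
move=> F_conn F_gt1 notP2 notP3 small [f [f_inj f_adj]].
have := odd_double_half #|F|; rewrite -muln2; set p := #|F|./2 in small f f_inj f_adj * => F_half.
have p_gt0 : 0 < p by lia.
have lt_pF : p.-1.+1 < #|F| by rewrite prednK //; lia.
have [v [X [F_le vX X_v X_pendant]]] := clique_star_pendants f_inj f_adj F_conn lt_pF.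
rewrite prednK // in F_le.
have X_nbrs : X \subset [pred y | adj v y] by apply/subsetP => x /X_v; rewrite inE adj_sym.
have X_le_deg : #|X| <= degree v by apply: subset_leq_card X_nbrs.
have star : [set: F] = v |: X.
  case: small => [F_le3 | deg_le].
    have p1 : p = 1 by lia.
    apply/esym/eqP; rewrite eqEcard subsetT cardsU1 vX cardsT add1n.
    by apply: leq_trans F_le _; rewrite p1 addn1.
  have card_eq : #|X| = #|[pred y | adj v y]|.
    by have := deg_le v; rewrite /degree in X_le_deg *; lia.
  have nbrs_X : {subset [pred y | adj v y] <= X}.
    by move=> y; rewrite -(subset_cardP card_eq X_nbrs).
  suff S_all : forall y, y \in [pred y | (y == v) || (y \in X)].
    by apply/setP => y; have := S_all y; rewrite !inE.
  apply: (connected_closed F_conn (x := v)) => [|a b]; first by rewrite inE eqxx.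
  by rewrite !inE => /orP[/eqP -> /nbrs_X -> | aX /(X_pendant _ aX) ->]; rewrite ?eqxx ?orbT.
have := star_card vX star; case: small => [F_le3 | /(_ v) deg_le] F_card.
  have [X_lt2 | X_ge2] := ltnP #|X| 2.
    by apply/notP2/(star_isomorphic_P2 vX X_v star); lia.
  by apply/notP3/(star_isomorphic_P3 vX X_v X_pendant star); lia.
by apply/notP2/(star_isomorphic_P2 vX X_v star); lia.
Qed.

Lemma high_degree_bounds (F : sgraph) phi k :
  3 < #|F| -> (exists v : F, #|F|./2 < degree v) ->
  sentence phi -> defines_sub_conn F phi k ->
  #|F|./2 < qdepth phi /\ #|F|./2 <= width phi.
Proof.
move=> F_gt3 high sphi def; have := odd_double_half #|F|; rewrite -muln2.
set p := #|F|./2 in high * => F_half.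
have p_range : 0 < p <= #|F| by apply/andP; split; lia.
apply: (defining_sentence_large (T_sym := @tail_rel_sym k.+1) (clique_path_classes p_range)
  (a := inr ord0) (b := inr ord0) _ sphi def) => //.
- exact: clique_path_connected.
- by rewrite clique_path_nverts; lia.
- exact: clique_path_contains.
- exact: clique_path_connected.
- by rewrite clique_path_nverts; lia.
- by apply: clique_path_not_contains; rewrite ?prednK //; lia.
Qed.

Lemma low_degree_bounds (F : sgraph) phi k :
  connected F -> 1 < #|F| -> ~ isomorphic F (P 2) -> ~ isomorphic F (P 3) ->
  (#|F| <= 3 \/ forall v : F, degree v <= #|F|./2) ->
  sentence phi -> defines_sub_conn F phi k ->
  #|F|./2 < qdepth phi /\ #|F|./2 <= width phi.
Proof.
move=> F_conn F_gt1 notP2 notP3 low sphi def; have := odd_double_half #|F|; rewrite -muln2.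
set p := #|F|./2 in low * => F_half.
have p_range : 0 < p <= #|F| by apply/andP; split; lia.
have p_le : p <= k + #|F| by lia.
apply: (defining_sentence_large (T_sym := star_rel_sym) (clique_star_classes p_range p_le)
  (a := inr None) (b := inr None) _ sphi def) => //.
- exact: clique_star_connected.
- by rewrite clique_star_nverts; lia.
- exact: clique_star_contains.
- exact: clique_star_connected.
- by rewrite clique_star_nverts; lia.
- exact: clique_star_not_contains.
Qed.

Theorem theorem5 (F : sgraph) :
  connected F -> ~ isomorphic F (P 2) -> ~ isomorphic F (P 3) ->
  forall (phi : form) (k : nat), sentence phi -> defines_sub_conn F phi k ->
    nverts F + 1 <= 2 * qdepth phi /\ nverts F <= 2 * width phi + 1.
Proof.
move=> F_conn notP2 notP3 phi k sphi def; rewrite /nverts.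
have := odd_double_half #|F|; rewrite -muln2 => F_half.
have [F_le1 | F_gt1] := leqP #|F| 1.
  by have := sentence_qdepth_gt0 sphi; have := F_conn.1; lia.
suff : #|F|./2 < qdepth phi /\ #|F|./2 <= width phi by lia.
have [/andP[F_gt3 /existsP high] | low] := boolP ((3 < #|F|) && [exists v : F, #|F|./2 < degree v]).
  exact: (high_degree_bounds F_gt3 high sphi def).
apply: (low_degree_bounds F_conn F_gt1 notP2 notP3 _ sphi def).
case: (leqP #|F| 3) => [|F_gt3]; [by left | right=> v].
by rewrite leqNgt; apply: contra low => high; rewrite F_gt3; apply/existsP; exists v.
Qed.
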